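(* Let $a>1$, $d\ge 4$, and let $G$ be generated by the security model $\mathcal{S}(n,a,d)$; let $T_1=\log^{a+1}n$. Then with probability $1-o(1)$: (1) every community (homochromatic set) of $G$ has size $O(\log^{a+1} n)$; and (2) for every $t\ge T_1$, every community at the end of time step $t$ has size $O(\log^{a+1} t)$.
   Context: Security model $\mathcal{S}(n,a,d)$ (homophyly exponent $a$, natural number $d$): start with an initial graph $G_2$ on two nodes, each of which is a seed node with its own distinct color. For $i=3,\dots,n$, given $G_{i-1}$, let $p_i=(\log i)^{-a}$ and create a new node $v$. With probability $p_i$, $v$ receives a brand-new color $c$ and is called the seed node of $c$; then one edge $(v,u)$ is added with $u$ chosen with probability proportional to degrees in $G_{i-1}$, and $d-1$ edges $(v,u_j)$ are added, each $u_j$ chosen uniformly at random among all seed nodes of $G_{i-1}$. Otherwise, $v$ picks a color $c$ uniformly at random among all colors present in $G_{i-1}$, takes color $c$, and $d$ edges $(v,u_j)$ are added, each $u_j$ chosen with probability proportional to degree among the nodes of color $c$ in $G_{i-1}$. The network is $G=G_n$. A homochromatic set is the set of all nodes of one color; here its size is the size of that set (at the end of the construction, or at the end of step $t$). *)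

From Stdlib Require Import Reals Lra List Arith ClassicalEpsilon.
Import ListNotations.
Open Scope R_scope.

Definition dist (A : Type) := list (R * A).

Definition dret {A} (x : A) : dist A := [(1, x)].

Definition dbind {A B} (m : dist A) (f : A -> dist B) : dist B :=
  flat_map (fun px => map (fun qy => (fst px * fst qy, snd qy)) (f (snd px))) m.

Definition bern (p : R) : dist bool := [(p, true); (1 - p, false)].

Definition weighted {A} (l : list (R * A)) : dist A :=
  let tot := fold_right (fun wx s => fst wx + s) 0 l in
  map (fun wx => (fst wx / tot, snd wx)) l.

Definition uniform {A} (l : list A) : dist A := weighted (map (fun x => (1, x)) l).

Fixpoint iid {A} (k : nat) (m : dist A) : dist (list A) :=
  match k with
  | O => dret []
  | S k' => dbind m (fun x => dbind (iid k' m) (fun xs => dret (x :: xs)))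
  end.

Definition prob {A} (m : dist A) (E : A -> Prop) : R :=
  fold_right (fun px s =>
    (if excluded_middle_informative (E (snd px)) then fst px else 0) + s) 0 m.

(** Nodes are 0, ..., N-1 in order of arrival; colours are 0, ..., ncol-1
    in order of creation; the graph is a multigraph given by its edge list. *)
Record state := mkState {
  ncol  : nat;
  col   : list nat;
  seedf : list bool;
  edges : list (nat * nat)
}.

Definition nnodes (G : state) : nat := length (col G).
Definition nodes (G : state) : list nat := seq 0 (nnodes G).
Definition color (G : state) (u : nat) : nat := nth u (col G) 0%nat.
Definition is_seed (G : state) (u : nat) : bool := nth u (seedf G) false.
Definition deg (G : state) (u : nat) : nat :=
  (length (filter (fun e => Nat.eqb (fst e) u) (edges G)) +
   length (filter (fun e => Nat.eqb (snd e) u) (edges G)))%nat.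

Definition class_size (G : state) (c : nat) : nat :=
  length (filter (fun u => Nat.eqb (color G u) c) (nodes G)).

Definition G2 : state := mkState 2 [0%nat; 1%nat] [true; true] [(0%nat, 1%nat)].

Definition p_i (a : R) (i : nat) : R := Rpower (ln (INR i)) (- a).

Definition add_node (G : state) (c : nat) (newcol seedv : bool) (targets : list nat) : state :=
  let v := nnodes G in
  mkState (if newcol then S (ncol G) else ncol G)
          (col G ++ [c]) (seedf G ++ [seedv])
          (edges G ++ map (fun w => (v, w)) targets).

Definition step (a : R) (d : nat) (i : nat) (G : state) : dist state :=
  dbind (bern (p_i a i)) (fun b =>
    if b then
      dbind (weighted (map (fun u => (INR (deg G u), u)) (nodes G))) (fun u =>
      dbind (iid (d - 1) (uniform (filter (is_seed G) (nodes G)))) (fun us =>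
      dret (add_node G (ncol G) true true (u :: us))))
    else
      dbind (uniform (seq 0 (ncol G))) (fun c =>
      dbind (iid d (weighted (map (fun u => (INR (deg G u), u))
                                  (filter (fun u => Nat.eqb (color G u) c) (nodes G)))))
        (fun us => dret (add_node G c false false us)))).

(** Trajectory [G_n; G_{n-1}; ...; G_2] of S(n,a,d) (head = G_n). *)
Fixpoint traj (a : R) (d : nat) (n : nat) : dist (list state) :=
  match n with
  | O => dret [G2]
  | S k => if Nat.leb k 1 then dret [G2]
           else dbind (traj a d k) (fun tr =>
                  dbind (step a d n (hd G2 tr)) (fun G => dret (G :: tr)))
  end.

Definition good (a C : R) (n : nat) (tr : list state) : Prop :=
  (forall c : nat,
     INR (class_size (hd G2 tr) c) <= C * Rpower (ln (INR n)) (a + 1)) /\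
  (forall Gt : state, In Gt tr ->
     Rpower (ln (INR n)) (a + 1) <= INR (nnodes Gt) ->
     forall c : nat,
       INR (class_size Gt c) <= C * Rpower (ln (INR (nnodes Gt))) (a + 1)).

From Pilot Require Import Defs.
From Stdlib Require Import Reals Lra Lia List Arith ClassicalEpsilon Classical.
Import ListNotations.
Open Scope R_scope.

(** The argument runs on two exponential supermartingales along the trajectory.
    With [N_t] colours after step [t] and [mu_t] the sum of the [p_i] up to [t],
    [exp (mu_t / 2 - N_t)] is a supermartingale, so [N_t >= mu_t / 4 >= t / (4 log^a t)]
    fails at a given time [t >= log T1] with probability [exp (- mu_t / 4) <= 1 / t^2].
    A new node joins a given colour with probability at most [1 / N_t], so
    [exp (|c|_t - 2 sum_(s < t) 1 / N_s)] is a supermartingale too; on the event that colours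
    are plentiful the sum is [O(log^(a+1) t)], and a class of size [24 log^(a+1) t] has
    probability [O(t^-3)]. Union bounds over the [t] colours and over the times [t >= T1]
    leave a total failure probability [O(1 / log T1)]. *)

(** * Finite distributions *)

Definition expect {A} (m : Defs.dist A) (f : A -> R) : R :=
  fold_right (fun px s => fst px * f (snd px) + s) 0 m.
Definition mass {A} (m : Defs.dist A) : R := expect m (fun _ => 1).
Definition nonneg {A} (m : Defs.dist A) : Prop := forall px, In px m -> 0 <= fst px.
Definition subprob {A} (m : Defs.dist A) : Prop := nonneg m /\ mass m <= 1.
Definition supp {A} (m : Defs.dist A) (x : A) : Prop := In x (map snd m).
Definition indicator (P : Prop) : R := if excluded_middle_informative P then 1 else 0.

Lemma indicator_bounds P : 0 <= indicator P <= 1.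
Proof. unfold indicator; destruct excluded_middle_informative; lra. Qed.

Lemma prob_expect {A} (m : Defs.dist A) E : prob m E = expect m (fun x => indicator (E x)).
Proof.
  induction m as [|[p x] m IH]; simpl; auto.
  rewrite IH; unfold indicator; destruct excluded_middle_informative; ring.
Qed.

Lemma expect_app {A} (m1 m2 : Defs.dist A) f : expect (m1 ++ m2) f = expect m1 f + expect m2 f.
Proof. induction m1 as [|[p x] m IH]; simpl; [ring | rewrite IH; ring]. Qed.

Lemma expect_plus {A} (m : Defs.dist A) f g :
  expect m (fun x => f x + g x) = expect m f + expect m g.
Proof. induction m as [|[p x] m IH]; simpl; [ring | rewrite IH; ring]. Qed.

Lemma expect_scal {A} (m : Defs.dist A) c f : expect m (fun x => c * f x) = c * expect m f.
Proof. induction m as [|[p x] m IH]; simpl; [ring | rewrite IH; ring]. Qed.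

Lemma expect_ext {A} (m : Defs.dist A) f g :
  (forall x, supp m x -> f x = g x) -> expect m f = expect m g.
Proof.
  unfold supp; induction m as [|[p x] m IH]; simpl; intros H; auto.
  rewrite H, IH by auto; reflexivity.
Qed.

Lemma expect_dret {A} (x : A) f : expect (dret x) f = f x.
Proof. unfold expect, dret; simpl; ring. Qed.

Lemma expect_dbind {A B} (m : Defs.dist A) (k : A -> Defs.dist B) f :
  expect (dbind m k) f = expect m (fun x => expect (k x) f).
Proof.
  unfold dbind; induction m as [|[p x] m IH]; simpl; auto.
  rewrite expect_app, IH; f_equal.
  induction (k x) as [|[q y] l IHl]; simpl; [ring | rewrite IHl; ring].
Qed.

Lemma expect_bern p f : expect (bern p) f = p * f true + (1 - p) * f false.
Proof. unfold bern, expect; simpl; ring. Qed.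

Lemma expect_le {A} (m : Defs.dist A) f g : nonneg m ->
  (forall x, supp m x -> f x <= g x) -> expect m f <= expect m g.
Proof.
  unfold nonneg, supp; induction m as [|[p x] m IH]; simpl; intros Hm Hfg; [lra |].
  assert (0 <= p) by (apply (Hm (p, x)); auto).
  assert (f x <= g x) by auto.
  assert (expect m f <= expect m g) by auto.
  nra.
Qed.

Lemma expect_nonneg {A} (m : Defs.dist A) f : nonneg m ->
  (forall x, supp m x -> 0 <= f x) -> 0 <= expect m f.
Proof.
  intros Hm Hf. apply Rle_trans with (expect m (fun _ => 0 * 1)).
  - rewrite expect_scal; lra.
  - apply expect_le; auto. intros; rewrite Rmult_0_l; auto.
Qed.

Lemma expect_le_const {A} (m : Defs.dist A) f v : subprob m -> 0 <= v ->
  (forall x, supp m x -> f x <= v) -> expect m f <= v.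
Proof.
  intros [Hm Hmass] Hv Hf. apply Rle_trans with (expect m (fun _ => v * 1)).
  - apply expect_le; auto. intros; rewrite Rmult_1_r; auto.
  - rewrite expect_scal; fold (mass m). nra.
Qed.

Lemma supp_dret {A} (x y : A) : supp (dret x) y -> y = x.
Proof. unfold supp, dret; simpl; intros [H | []]; auto. Qed.

Lemma supp_dbind {A B} (m : Defs.dist A) (k : A -> Defs.dist B) y :
  supp (dbind m k) y -> exists x, supp m x /\ supp (k x) y.
Proof.
  unfold supp, dbind; intros H. apply in_map_iff in H as [[q y'] [<- Hin]].
  apply in_flat_map in Hin as [[p x] [Hx Hy]].
  apply in_map_iff in Hy as [[r z] [Heq Hz]]. injection Heq as _ <-.
  exists x; split; apply in_map_iff; [exists (p, x) | exists (r, z)]; auto.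
Qed.

Lemma subprob_dret {A} (x : A) : subprob (dret x).
Proof.
  split; [intros px [<- | []]; simpl; lra |].
  unfold mass; rewrite expect_dret; lra.
Qed.

Lemma subprob_dbind {A B} (m : Defs.dist A) (k : A -> Defs.dist B) :
  subprob m -> (forall x, supp m x -> subprob (k x)) -> subprob (dbind m k).
Proof.
  intros [Hm Hmass] Hk. split.
  - intros [q y] Hin. unfold dbind in Hin. apply in_flat_map in Hin as [[p x] [Hx Hy]].
    apply in_map_iff in Hy as [[r z] [Heq Hz]]. injection Heq as <- <-. simpl.
    assert (Hsx : supp m x) by (apply in_map_iff; exists (p, x); auto).
    apply Rmult_le_pos; [apply (Hm (p, x)); auto | apply (proj1 (Hk x Hsx) (r, z)); auto].
  - unfold mass at 1; rewrite expect_dbind.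
    apply expect_le_const; [split | lra | intros x Hx; apply Hk]; auto.
Qed.

Lemma mass_dbind {A B} (m : Defs.dist A) (k : A -> Defs.dist B) :
  mass m = 1 -> (forall x, supp m x -> mass (k x) = 1) -> mass (dbind m k) = 1.
Proof.
  intros Hm Hk. unfold mass at 1. rewrite expect_dbind, (expect_ext m _ (fun _ => 1)); auto.
Qed.

Lemma mass_dret {A} (x : A) : mass (dret x) = 1.
Proof. unfold mass; rewrite expect_dret; auto. Qed.

Definition total {A} (l : list (R * A)) : R := fold_right (fun wx s => fst wx + s) 0 l.

Lemma expect_weighted {A} (l : list (R * A)) f :
  expect (weighted l) f = expect l f / total l.
Proof.
  unfold weighted; fold (total l). generalize (total l) as t; intros t.
  induction l as [|[w x] l IH]; simpl; [unfold Rdiv; ring | rewrite IH; unfold Rdiv; ring].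
Qed.

Lemma expect_one_total {A} (l : list (R * A)) : expect l (fun _ => 1) = total l.
Proof. induction l as [|[w x] l IH]; simpl; auto. rewrite IH; ring. Qed.

Lemma total_nonneg {A} (l : list (R * A)) :
  (forall wx, In wx l -> 0 <= fst wx) -> 0 <= total l.
Proof.
  induction l as [|[w x] l IH]; simpl; intros H; [lra |].
  assert (0 <= w) by (apply (H (w, x)); auto). assert (0 <= total l) by auto. lra.
Qed.

Lemma total_ge_weight {A} (l : list (R * A)) wx :
  (forall wx, In wx l -> 0 <= fst wx) -> In wx l -> fst wx <= total l.
Proof.
  induction l as [|[w x] l IH]; simpl; intros H Hin; [tauto |].
  assert (0 <= w) by (apply (H (w, x)); auto).
  assert (0 <= total l) by (apply total_nonneg; auto).
  destruct Hin as [<- | Hin]; simpl; [lra |]. assert (fst wx <= total l) by auto. lra.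
Qed.

Lemma subprob_weighted {A} (l : list (R * A)) :
  (forall wx, In wx l -> 0 <= fst wx) -> subprob (weighted l).
Proof.
  intros Hl. pose proof (total_nonneg l Hl) as Ht. split.
  - intros [q y] Hin. unfold weighted in Hin. apply in_map_iff in Hin as [[w x] [Heq Hx]].
    injection Heq as <- <-. fold (total l). simpl.
    assert (0 <= w) by (apply (Hl (w, x)); auto).
    destruct (Req_dec (total l) 0) as [E | E].
    + rewrite E; unfold Rdiv; rewrite Rinv_0; lra.
    + apply Rmult_le_pos; [lra | apply Rlt_le, Rinv_0_lt_compat; lra].
  - unfold mass. rewrite expect_weighted, expect_one_total.
    destruct (Req_dec (total l) 0) as [E | E].
    + rewrite E; unfold Rdiv; rewrite Rinv_0; lra.
    + unfold Rdiv; rewrite Rinv_r; lra.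
Qed.

Lemma mass_weighted {A} (l : list (R * A)) wx :
  (forall wx, In wx l -> 0 <= fst wx) -> In wx l -> 0 < fst wx -> mass (weighted l) = 1.
Proof.
  intros Hl Hin Hw. pose proof (total_ge_weight l wx Hl Hin).
  unfold mass. rewrite expect_weighted, expect_one_total. field. lra.
Qed.

Lemma supp_weighted {A} (l : list (R * A)) y : supp (weighted l) y -> In y (map snd l).
Proof. unfold supp, weighted. rewrite map_map; auto. Qed.

Lemma ones_nonneg {A} (l : list A) : forall wx, In wx (map (fun x => (1, x)) l) -> 0 <= fst wx.
Proof. intros wx H. apply in_map_iff in H as [u [<- _]]. simpl; lra. Qed.

Lemma subprob_uniform {A} (l : list A) : subprob (uniform l).
Proof. apply subprob_weighted, ones_nonneg. Qed.

Lemma mass_uniform {A} (l : list A) x : In x l -> mass (uniform l) = 1.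
Proof.
  intros Hx. apply (mass_weighted _ (1, x)); [apply ones_nonneg | | simpl; lra].
  apply in_map_iff; exists x; auto.
Qed.

Lemma supp_uniform {A} (l : list A) x : supp (uniform l) x -> In x l.
Proof. intros H. apply supp_weighted in H. rewrite map_map, map_id in H; auto. Qed.

Definition sumR (f : nat -> R) (l : list nat) : R := fold_right (fun c s => f c + s) 0 l.

Lemma sumR_app f l1 l2 : sumR f (l1 ++ l2) = sumR f l1 + sumR f l2.
Proof. induction l1; simpl; [ring | rewrite IHl1; ring]. Qed.

Lemma sumR_plus f g l : sumR (fun x => f x + g x) l = sumR f l + sumR g l.
Proof. induction l; simpl; [ring | rewrite IHl; ring]. Qed.

Lemma sumR_scal l k f : sumR (fun x => k * f x) l = k * sumR f l.
Proof. induction l; simpl; [ring | rewrite IHl; ring]. Qed.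

Lemma sumR_const l k : sumR (fun _ => k) l = k * INR (length l).
Proof. induction l; simpl; [ring |]. rewrite IHl. destruct (length l); simpl; ring. Qed.

Lemma sumR_le l f g : (forall x, In x l -> f x <= g x) -> sumR f l <= sumR g l.
Proof.
  induction l; simpl; intros H; [lra |].
  assert (f a <= g a) by auto. assert (sumR f l <= sumR g l) by auto. lra.
Qed.

Lemma sumR_ge_const l f v : (forall x, In x l -> v <= f x) -> v * INR (length l) <= sumR f l.
Proof. intros H. rewrite <- sumR_const. apply sumR_le; auto. Qed.

Lemma expect_uniform (l : list nat) f : expect (uniform l) f = sumR f l / INR (length l).
Proof.
  unfold uniform. rewrite expect_weighted. f_equal.
  - induction l; simpl; auto. rewrite IHl; ring.
  - induction l; simpl; auto. unfold total in *; simpl in *. rewrite IHl.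
    destruct (length l); simpl; lra.
Qed.

Lemma subprob_bern p : 0 <= p <= 1 -> subprob (bern p).
Proof.
  intros Hp. split.
  - intros px [<- | [<- | []]]; simpl; lra.
  - unfold mass; rewrite expect_bern; lra.
Qed.

Lemma subprob_iid {A} k (m : Defs.dist A) : subprob m -> subprob (iid k m).
Proof.
  intros Hm. induction k as [|k IH]; cbn [iid]; [apply subprob_dret |].
  apply subprob_dbind; auto; intros.
  apply subprob_dbind; auto; intros. apply subprob_dret.
Qed.

Lemma mass_iid {A} k (m : Defs.dist A) : mass m = 1 -> mass (iid k m) = 1.
Proof.
  intros Hm. induction k as [|k IH]; cbn [iid]; [apply mass_dret |].
  apply mass_dbind; auto; intros. apply mass_dbind; auto; intros. apply mass_dret.
Qed.

Lemma supp_iid {A} k (m : Defs.dist A) xs : supp (iid k m) xs -> length xs = k.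
Proof.
  revert xs; induction k as [|k IH]; cbn [iid]; intros xs H.
  - apply supp_dret in H; subst; auto.
  - apply supp_dbind in H as [x [_ H]]. apply supp_dbind in H as [ys [Hy H]].
    apply supp_dret in H; subst; simpl; auto.
Qed.

Lemma prob_le {A} (m : Defs.dist A) (E F : A -> Prop) : nonneg m ->
  (forall x, supp m x -> E x -> F x) -> prob m E <= prob m F.
Proof.
  intros Hm H. rewrite !prob_expect. apply expect_le; auto. intros x Hx. unfold indicator.
  destruct (excluded_middle_informative (E x)), (excluded_middle_informative (F x));
    try lra; exfalso; auto.
Qed.

Lemma prob_or {A} (m : Defs.dist A) (E F : A -> Prop) : nonneg m ->
  prob m (fun x => E x \/ F x) <= prob m E + prob m F.
Proof.
  intros Hm. rewrite !prob_expect, <- expect_plus. apply expect_le; auto. intros x _.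
  unfold indicator. destruct (excluded_middle_informative (E x)),
    (excluded_middle_informative (F x)), (excluded_middle_informative (E x \/ F x));
    try lra; tauto.
Qed.

Lemma prob_False {A} (m : Defs.dist A) : prob m (fun _ => False) = 0.
Proof.
  induction m as [|[p x] m IH]; simpl; auto.
  rewrite IH; destruct excluded_middle_informative; [contradiction | ring].
Qed.

Lemma prob_never {A} (m : Defs.dist A) (E : A -> Prop) : nonneg m ->
  (forall x, supp m x -> ~ E x) -> prob m E <= 0.
Proof. intros Hm H. rewrite <- (prob_False m). apply prob_le; firstorder. Qed.

Lemma prob_union {A} (m : Defs.dist A) (l : list nat) (E : nat -> A -> Prop) : nonneg m ->
  prob m (fun x => exists i, In i l /\ E i x) <= sumR (fun i => prob m (E i)) l.
Proof.
  intros Hm. induction l as [|i l IH]; simpl.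
  - apply prob_never; auto. intros x _ [i [[] _]].
  - eapply Rle_trans; [| apply Rplus_le_compat_l, IH].
    eapply Rle_trans; [| apply prob_or; auto].
    apply prob_le; auto. intros x _ [j [[<- | Hj] HE]]; [left | right; exists j]; auto.
Qed.

Lemma prob_not {A} (m : Defs.dist A) E : prob m E + prob m (fun x => ~ E x) = mass m.
Proof.
  rewrite !prob_expect. unfold mass. rewrite <- expect_plus. apply expect_ext.
  intros x _. unfold indicator.
  destruct excluded_middle_informative; destruct excluded_middle_informative; tauto || lra.
Qed.

Lemma markov {A} (m : Defs.dist A) (f : A -> R) v : nonneg m -> 0 < v ->
  (forall x, supp m x -> 0 <= f x) -> prob m (fun x => v <= f x) <= expect m f / v.
Proof.
  intros Hm Hv Hf. rewrite prob_expect. unfold Rdiv. rewrite Rmult_comm, <- expect_scal.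
  apply expect_le; auto. intros x Hx. unfold indicator.
  assert (0 < / v) by (apply Rinv_0_lt_compat; auto).
  specialize (Hf x Hx). destruct excluded_middle_informative.
  - assert (/ v * v = 1) by (field; lra). nra.
  - apply Rmult_le_pos; lra.
Qed.

(** * One step of the model *)

Lemma nnodes_add_node G c nc sv ts : nnodes (add_node G c nc sv ts) = S (nnodes G).
Proof. unfold nnodes, add_node; simpl. rewrite length_app; simpl; lia. Qed.

Lemma nodes_add_node G c nc sv ts : nodes (add_node G c nc sv ts) = nodes G ++ [nnodes G].
Proof. unfold nodes. rewrite nnodes_add_node, seq_S. reflexivity. Qed.

Lemma color_add_node_old G c nc sv ts u :
  (u < nnodes G)%nat -> color (add_node G c nc sv ts) u = color G u.
Proof. unfold color, nnodes, add_node; simpl; intros. rewrite app_nth1; auto. Qed.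

Lemma color_add_node_new G c nc sv ts : color (add_node G c nc sv ts) (nnodes G) = c.
Proof.
  unfold color, nnodes, add_node; simpl. rewrite app_nth2, Nat.sub_diag; auto.
Qed.

Lemma deg_add_node_old G c nc sv ts u : (deg G u <= deg (add_node G c nc sv ts) u)%nat.
Proof. unfold deg, add_node; simpl. rewrite !filter_app, !length_app. lia. Qed.

Lemma deg_add_node_new G c nc sv ts :
  ts <> [] -> (1 <= deg (add_node G c nc sv ts) (nnodes G))%nat.
Proof.
  intros H. unfold deg, add_node; simpl. rewrite !filter_app, !length_app.
  destruct ts as [|w ts]; [congruence |]. simpl. rewrite Nat.eqb_refl. simpl. lia.
Qed.

Lemma class_size_add_node G c nc sv ts c' :
  class_size (add_node G c nc sv ts) c' =
  (class_size G c' + (if Nat.eqb c c' then 1 else 0))%nat.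
Proof.
  unfold class_size. rewrite nodes_add_node, filter_app, length_app. f_equal.
  - f_equal. apply filter_ext_in. intros u Hu. unfold nodes in Hu. apply in_seq in Hu.
    rewrite color_add_node_old; auto. lia.
  - simpl. rewrite color_add_node_new. destruct (Nat.eqb c c'); auto.
Qed.

Record wf_state (G : state) : Prop := {
  ncol_pos : (1 <= ncol G)%nat;
  ncol_le_nnodes : (ncol G <= nnodes G)%nat;
  color_lt_ncol : forall u, (u < nnodes G)%nat -> (color G u < ncol G)%nat;
  deg_pos : forall u, (u < nnodes G)%nat -> (1 <= deg G u)%nat;
  color_inhabited : forall c, (c < ncol G)%nat -> exists u, (u < nnodes G)%nat /\ color G u = c;
  node0_seed : is_seed G 0 = true
}.

Lemma wf_G2 : wf_state G2.
Proof.
  split; unfold G2, nnodes, color, deg, is_seed; simpl; auto.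
  - intros [|[|u]] Hu; simpl; lia.
  - intros [|[|u]] Hu; simpl; lia.
  - intros [|[|c]] Hc; [exists 0%nat | exists 1%nat | lia]; split; auto; lia.
Qed.

Lemma class_size_unused G c : wf_state G -> (ncol G <= c)%nat -> class_size G c = 0%nat.
Proof.
  intros HG Hc. unfold class_size.
  rewrite (filter_ext_in _ (fun _ => false)), filter_false; auto.
  intros u Hu. unfold nodes in Hu. apply in_seq in Hu.
  pose proof (color_lt_ncol G HG u ltac:(lia)). apply Nat.eqb_neq. lia.
Qed.

Definition step_result (d : nat) (G G' : state) : Prop :=
  exists c nc ts, G' = add_node G c nc nc ts /\
   ((nc = true /\ c = ncol G /\ ts <> []) \/
    (nc = false /\ (c < ncol G)%nat /\ length ts = d)).

Lemma supp_step a d i G G' : supp (step a d i G) G' -> step_result d G G'.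
Proof.
  unfold step; intros H. apply supp_dbind in H as [[|] [_ H]].
  - apply supp_dbind in H as [u [_ H]]. apply supp_dbind in H as [us [_ H]].
    apply supp_dret in H. subst. exists (ncol G), true, (u :: us).
    split; auto. left; repeat split; auto; discriminate.
  - apply supp_dbind in H as [c [Hc H]]. apply supp_dbind in H as [us [Hus H]].
    apply supp_dret in H. subst. apply supp_uniform, in_seq in Hc. apply supp_iid in Hus.
    exists c, false, us. split; auto. right; repeat split; auto; lia.
Qed.

Lemma wf_step_result d G G' : (1 <= d)%nat -> wf_state G -> step_result d G G' -> wf_state G'.
Proof.
  intros Hd HG [c [nc [ts [-> Hc]]]].
  assert (Hts : ts <> []).
  { destruct Hc as [[_ [_ ?]] | [_ [_ Hl]]]; auto. intros ->; simpl in Hl; lia. }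
  pose proof (ncol_pos G HG). pose proof (ncol_le_nnodes G HG).
  split; simpl; rewrite ?nnodes_add_node.
  - destruct nc; lia.
  - destruct nc; lia.
  - intros u Hu. destruct (Nat.eq_dec u (nnodes G)) as [-> | Hne].
    + rewrite color_add_node_new. destruct Hc as [[-> [-> _]] | [-> [? _]]]; lia.
    + rewrite color_add_node_old by lia.
      pose proof (color_lt_ncol G HG u ltac:(lia)). destruct nc; lia.
  - intros u Hu. destruct (Nat.eq_dec u (nnodes G)) as [-> | Hne].
    + apply deg_add_node_new; auto.
    + pose proof (deg_add_node_old G c nc nc ts u). pose proof (deg_pos G HG u ltac:(lia)). lia.
  - intros c' Hc'. destruct (Nat.lt_ge_cases c' (ncol G)) as [Hl | Hg].
    + destruct (color_inhabited G HG c' Hl) as [u [Hu Hcu]].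
      exists u. split; [lia |]. rewrite color_add_node_old; auto.
    + destruct Hc as [[-> [-> _]] | [-> _]]; [| lia].
      exists (nnodes G). split; [lia |]. rewrite color_add_node_new. lia.
  - pose proof (node0_seed G HG). unfold is_seed in *; simpl.
    destruct (seedf G); simpl; [discriminate | auto].
Qed.

Lemma ln_le_mono x y : 0 < x -> x <= y -> ln x <= ln y.
Proof. intros Hx [H | <-]; [left; apply ln_increasing | right]; auto. Qed.

Lemma exp_le_mono x y : x <= y -> exp x <= exp y.
Proof. intros [H | <-]; [left; apply exp_increasing | right]; auto. Qed.

Lemma exp_le_1 x : x <= 0 -> exp x <= 1.
Proof. intros H. rewrite <- exp_0. apply exp_le_mono; auto. Qed.

Lemma ln_INR_ge1 i : (3 <= i)%nat -> 1 <= ln (INR i).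
Proof.
  intros H. rewrite <- (ln_exp 1). apply ln_le_mono; [apply exp_pos |].
  apply Rle_trans with 3; [apply exp_le_3 |].
  replace 3 with (INR 3) by (simpl; lra). apply le_INR; auto.
Qed.

Lemma p_i_bounds a i : 0 <= a -> (3 <= i)%nat -> 0 <= p_i a i <= 1.
Proof.
  intros Ha Hi. unfold p_i, Rpower. split; [left; apply exp_pos |].
  apply exp_le_1.
  pose proof (ln_INR_ge1 i Hi). assert (0 <= ln (ln (INR i))) by (rewrite <- ln_1; apply ln_le_mono; lra).
  nra.
Qed.

Lemma deg_weights_nonneg G (l : list nat) :
  forall wx, In wx (map (fun u => (INR (deg G u), u)) l) -> 0 <= fst wx.
Proof. intros wx H. apply in_map_iff in H as [u [<- _]]. apply pos_INR. Qed.

Lemma mass_deg_weighted G l u :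
  In u l -> (1 <= deg G u)%nat -> mass (weighted (map (fun u => (INR (deg G u), u)) l)) = 1.
Proof.
  intros Hu Hd. apply (mass_weighted _ (INR (deg G u), u)); [apply deg_weights_nonneg | |].
  - apply in_map_iff; exists u; auto.
  - apply lt_0_INR; lia.
Qed.

Lemma subprob_step a d i G : 0 <= p_i a i <= 1 -> subprob (step a d i G).
Proof.
  intros Hp. unfold step. apply subprob_dbind; [apply subprob_bern; auto |].
  intros [|] _; repeat first
    [ apply subprob_dret | apply subprob_uniform | apply subprob_iid
    | apply subprob_weighted, deg_weights_nonneg | apply subprob_dbind; intros ].
Qed.

Lemma mass_step a d i G : wf_state G -> mass (step a d i G) = 1.
Proof.
  intros HG. pose proof (ncol_pos G HG). pose proof (ncol_le_nnodes G HG).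
  assert (Hnode0 : In 0%nat (nodes G)) by (unfold nodes; apply in_seq; lia).
  unfold step. apply mass_dbind; [unfold mass; rewrite expect_bern; ring | intros [|] _].
  - apply mass_dbind; [apply (mass_deg_weighted G _ 0%nat); auto; apply (deg_pos G HG); lia |].
    intros. apply mass_dbind; [| intros; apply mass_dret].
    apply mass_iid, (mass_uniform _ 0%nat), filter_In. split; auto. apply (node0_seed G HG).
  - apply mass_dbind; [apply (mass_uniform _ 0%nat), in_seq; lia |].
    intros c Hc. apply supp_uniform, in_seq in Hc.
    destruct (color_inhabited G HG c ltac:(lia)) as [u [Hu Hcu]].
    apply mass_dbind; [| intros; apply mass_dret].
    apply mass_iid, (mass_deg_weighted G _ u); [| apply (deg_pos G HG); auto].
    apply filter_In. split; [unfold nodes; apply in_seq; lia | apply Nat.eqb_eq; auto].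
Qed.

Lemma expect_step_le a d i G F v_new (v_old : nat -> R) :
  0 <= p_i a i <= 1 -> 0 <= v_new -> (forall c, 0 <= v_old c) ->
  (forall u us, F (add_node G (ncol G) true true (u :: us)) <= v_new) ->
  (forall c us, (c < ncol G)%nat -> F (add_node G c false false us) <= v_old c) ->
  expect (step a d i G) F <=
  p_i a i * v_new + (1 - p_i a i) * (sumR v_old (seq 0 (ncol G)) / INR (ncol G)).
Proof.
  intros Hp Hnew Hold Fnew Fold. unfold step. rewrite expect_dbind, expect_bern.
  assert (HW : forall l, subprob (weighted (map (fun u => (INR (deg G u), u)) l)))
    by (intros; apply subprob_weighted, deg_weights_nonneg).
  apply Rplus_le_compat; apply Rmult_le_compat_l; try lra.
  - rewrite expect_dbind. apply expect_le_const; auto. intros u _.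
    rewrite expect_dbind. apply expect_le_const; auto using subprob_iid, subprob_uniform.
    intros us _. rewrite expect_dret. auto.
  - rewrite expect_dbind, expect_uniform, length_seq.
    unfold Rdiv. apply Rmult_le_compat_r.
    { destruct (ncol G); [simpl; rewrite Rinv_0; lra | apply Rlt_le, Rinv_0_lt_compat, lt_0_INR; lia]. }
    apply sumR_le. intros c Hc. apply in_seq in Hc.
    rewrite expect_dbind. apply expect_le_const; auto using subprob_iid.
    intros us _. rewrite expect_dret. apply Fold. lia.
Qed.

(** * Trajectories *)

Fixpoint chain (tr : list state) : Prop :=
  match tr with
  | [] => False
  | [G] => nnodes G = 2%nat
  | G :: ((G' :: _) as r) => nnodes G = S (nnodes G') /\ chain r
  end.

Definition traj_wf (n : nat) (tr : list state) : Prop :=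
  chain tr /\ nnodes (hd G2 tr) = Nat.max n 2 /\ Forall wf_state tr.

Lemma chain_tail G r : chain (G :: r) -> r <> [] -> chain r.
Proof. destruct r; simpl; tauto. Qed.

Lemma chain_app_inv l1 r : chain (l1 ++ r) -> r <> [] -> chain r.
Proof.
  induction l1 as [|G l1 IH]; simpl; auto. intros Hc Hr.
  apply IH; auto. apply (chain_tail G); auto. destruct l1, r; simpl; congruence.
Qed.

Lemma chain_nnodes_ge2 tr : chain tr -> (2 <= nnodes (hd G2 tr))%nat.
Proof.
  induction tr as [|G [|G' r] IH]; simpl; [tauto | lia |].
  intros [H1 H2]. specialize (IH H2). simpl in IH. lia.
Qed.

Lemma chain_nnodes_lt G r : chain (G :: r) -> forall G', In G' r -> (nnodes G' < nnodes G)%nat.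
Proof.
  revert G. induction r as [|G1 r IH]; simpl; intros G Hc G' Hin; [contradiction |].
  destruct Hc as [H1 H2]. destruct Hin as [<- | Hin]; [lia |].
  specialize (IH G1 H2 G' Hin). lia.
Qed.

Lemma chain_In_nnodes tr G : chain tr -> In G tr ->
  (2 <= nnodes G <= nnodes (hd G2 tr))%nat.
Proof.
  intros Hc Hin. apply in_split in Hin as [l1 [l2 Htr]].
  assert (Hl2 : chain (G :: l2)) by (subst; apply (chain_app_inv l1); auto; discriminate).
  pose proof (chain_nnodes_ge2 _ Hl2). split; [auto |].
  subst tr. destruct l1 as [|G0 l1]; simpl; [lia |].
  apply Nat.lt_le_incl, (chain_nnodes_lt G0 (l1 ++ G :: l2)); auto.
  apply in_or_app; simpl; auto.
Qed.

Lemma traj_small a d k : (k <= 2)%nat -> traj a d k = dret [G2].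
Proof. intros Hk. destruct k as [|[|[|k]]]; simpl; auto; lia. Qed.

Lemma traj_S a d k : (2 <= k)%nat -> traj a d (S k) =
  dbind (traj a d k) (fun tr => dbind (step a d (S k) (hd G2 tr)) (fun G => dret (G :: tr))).
Proof.
  intros Hk. simpl. destruct (Nat.leb k 1) eqn:E; [apply Nat.leb_le in E; lia | auto].
Qed.

Lemma traj_wf_G2 n : (n <= 2)%nat -> traj_wf n [G2].
Proof.
  intros Hn. split; [reflexivity | split; [| constructor; auto using wf_G2]].
  simpl. unfold nnodes; simpl. lia.
Qed.

Lemma supp_traj_wf a d n tr : (1 <= d)%nat -> supp (traj a d n) tr -> traj_wf n tr.
Proof.
  intros Hd. revert tr. induction n as [|k IH]; intros tr H.
  - rewrite traj_small in H by lia. apply supp_dret in H; subst. apply traj_wf_G2; lia.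
  - destruct (Nat.le_gt_cases (S k) 2) as [Hk | Hk].
    + rewrite traj_small in H by lia. apply supp_dret in H; subst. apply traj_wf_G2; lia.
    + rewrite traj_S in H by lia. apply supp_dbind in H as [tr0 [H0 H]].
      apply supp_dbind in H as [G [HG H]]. apply supp_dret in H; subst.
      destruct (IH tr0 H0) as [Hc [Hn Hf]].
      assert (HI : wf_state (hd G2 tr0)) by (destruct tr0; [contradiction | inversion Hf; auto]).
      apply supp_step in HG. pose proof HG as [c [nc [ts [-> _]]]].
      split; [| split].
      * destruct tr0; [contradiction |]. split; auto. simpl in *. apply nnodes_add_node.
      * simpl. rewrite nnodes_add_node, Hn. lia.
      * constructor; auto. apply (wf_step_result d (hd G2 tr0)); auto.
Qed.

Lemma traj_wf_head n tr : traj_wf n tr -> exists G r, tr = G :: r /\ wf_state G.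
Proof.
  intros [Hc [_ Hf]]. destruct tr as [|G r]; [contradiction |].
  exists G, r. inversion Hf; auto.
Qed.

Lemma subprob_traj a d n : 0 <= a -> subprob (traj a d n).
Proof.
  intros Ha. induction n as [|k IH]; [rewrite traj_small by lia; apply subprob_dret |].
  destruct (Nat.le_gt_cases (S k) 2) as [Hk | Hk].
  - rewrite traj_small by lia. apply subprob_dret.
  - rewrite traj_S by lia. apply subprob_dbind; auto. intros.
    apply subprob_dbind; [apply subprob_step, p_i_bounds; auto; lia | intros; apply subprob_dret].
Qed.

Lemma mass_traj a d n : (1 <= d)%nat -> mass (traj a d n) = 1.
Proof.
  intros Hd. induction n as [|k IH]; [rewrite traj_small by lia; apply mass_dret |].
  destruct (Nat.le_gt_cases (S k) 2) as [Hk | Hk].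
  - rewrite traj_small by lia. apply mass_dret.
  - rewrite traj_S by lia. apply mass_dbind; auto. intros tr Htr.
    destruct (traj_wf_head k tr (supp_traj_wf a d k tr Hd Htr)) as [G [r [-> HG]]].
    apply mass_dbind; [apply mass_step; auto | intros; apply mass_dret].
Qed.

Lemma traj_supermartingale a d (Phi : list state -> R) n : 0 <= a -> (1 <= d)%nat ->
  (forall k tr, (2 <= k)%nat -> traj_wf k tr ->
     expect (step a d (S k) (hd G2 tr)) (fun G => Phi (G :: tr)) <= Phi tr) ->
  expect (traj a d n) Phi <= Phi [G2].
Proof.
  intros Ha Hd H. induction n as [|k IH]; [rewrite traj_small, expect_dret by lia; lra |].
  destruct (Nat.le_gt_cases (S k) 2) as [Hk | Hk].
  - rewrite traj_small, expect_dret by lia. lra.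
  - rewrite traj_S, expect_dbind by lia. eapply Rle_trans; [| apply IH].
    apply expect_le; [apply subprob_traj; auto |]. intros tr Htr. rewrite expect_dbind.
    rewrite (expect_ext _ _ (fun G => Phi (G :: tr))) by (intros; apply expect_dret).
    apply H; [lia | apply supp_traj_wf with a d; auto].
Qed.

Fixpoint exists_suffix (P : state -> list state -> Prop) (tr : list state) : Prop :=
  match tr with [] => False | G :: r => P G r \/ exists_suffix P r end.

Definition at_head (P : state -> list state -> Prop) (tr : list state) : Prop :=
  match tr with [] => False | G :: r => P G r end.

Lemma exists_suffix_app (P : state -> list state -> Prop) l1 G r :
  P G r -> exists_suffix P (l1 ++ G :: r).
Proof. induction l1; simpl; auto. Qed.

Lemma exists_suffix_chain i P tr : chain tr ->
  exists_suffix (fun G r => nnodes G = i /\ P G r) tr ->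
  (i <= nnodes (hd G2 tr))%nat /\ (i = nnodes (hd G2 tr) -> at_head P tr).
Proof.
  induction tr as [|G r IH]; simpl; [tauto |]. intros Hc [[Hi HP] | Hr]; [subst; auto |].
  destruct r as [|G' r']; simpl in Hr; [contradiction |].
  destruct Hc as [Hn Hc]. destruct (IH Hc Hr) as [Hle _]. simpl in Hle. split; lia.
Qed.

(** An event witnessed by the graph with [i] nodes is decided by time [i]. *)
Lemma prob_exists_suffix_le a d i n P : 0 <= a -> (1 <= d)%nat -> (2 <= i <= n)%nat ->
  prob (traj a d n) (exists_suffix (fun G r => nnodes G = i /\ P G r))
  <= prob (traj a d i) (at_head P).
Proof.
  intros Ha Hd [Hi Hn]. induction Hn as [|n Hn IH].
  - apply prob_le; [apply subprob_traj; auto |]. intros tr Htr HE.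
    destruct (supp_traj_wf a d i tr Hd Htr) as [Hc [Hh _]].
    apply (exists_suffix_chain i P tr Hc HE). rewrite Hh. lia.
  - eapply Rle_trans; [| apply IH]. rewrite traj_S by lia. rewrite !prob_expect, expect_dbind.
    apply expect_le; [apply subprob_traj; auto |]. intros tr Htr. rewrite expect_dbind.
    destruct (supp_traj_wf a d n tr Hd Htr) as [Hc [Hh _]].
    apply expect_le_const; [apply subprob_step, p_i_bounds; auto; lia | apply indicator_bounds |].
    intros G HG. rewrite expect_dret. apply supp_step in HG as [c [nc [ts [-> _]]]].
    unfold indicator. destruct excluded_middle_informative as [E | E];
      [| destruct excluded_middle_informative; lra].
    destruct excluded_middle_informative as [E' | E']; [lra |]. exfalso.
    simpl in E. destruct E as [[E1 _] | E]; auto. rewrite nnodes_add_node, Hh in E1. lia.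
Qed.

(** * Two exponential supermartingales *)

Lemma one_plus_mul_exp_opp_le x : (1 + x) * exp (- x) <= 1.
Proof.
  pose proof (exp_ineq1_le x). pose proof (exp_pos (- x)).
  assert (exp x * exp (- x) = 1) by (rewrite <- exp_plus, Rplus_opp_r; apply exp_0).
  nra.
Qed.

Lemma exp_m1_le_half : exp (-1) <= / 2.
Proof.
  pose proof (one_plus_mul_exp_opp_le 1). replace (-1) with (- (1)) by ring. lra.
Qed.

Definition inv_ncol_sum (r : list state) : R := fold_right (fun G s => / INR (ncol G) + s) 0 r.

(** Unlike [class_size], the excess is not changed by the creation of a fresh colour, even
    when the fresh colour is [c]. *)
Definition excess (G : state) (c : nat) : R :=
  INR (class_size G c) - (if Nat.ltb c (ncol G) then 1 else 0).

Lemma excess_fresh G c ts : wf_state G ->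
  excess (add_node G (ncol G) true true ts) c = excess G c.
Proof.
  intros HG. unfold excess. rewrite class_size_add_node. simpl ncol.
  destruct (Nat.eqb (ncol G) c) eqn:E.
  - apply Nat.eqb_eq in E. rewrite (class_size_unused G c HG) by lia.
    rewrite (proj2 (Nat.ltb_lt c (S (ncol G)))), (proj2 (Nat.ltb_ge c (ncol G))) by lia.
    simpl; ring.
  - apply Nat.eqb_neq in E. rewrite Nat.add_0_r.
    destruct (Nat.ltb c (ncol G)) eqn:E1;
      [rewrite (proj2 (Nat.ltb_lt c (S (ncol G)))) by (apply Nat.ltb_lt in E1; lia)
      | rewrite (proj2 (Nat.ltb_ge c (S (ncol G)))) by (apply Nat.ltb_ge in E1; lia)]; ring.
Qed.

Lemma excess_old G c c' ts :
  excess (add_node G c' false false ts) c = excess G c + (if Nat.eqb c' c then 1 else 0).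
Proof.
  unfold excess. rewrite class_size_add_node, plus_INR. simpl ncol.
  destruct (Nat.eqb c' c); simpl; ring.
Qed.

Definition class_potential (c : nat) (tr : list state) : R :=
  match tr with
  | [] => 1
  | G :: r => exp (excess G c - 2 * inv_ncol_sum r)
  end.

Lemma sumR_single_hit (f : nat -> R) c N : (forall c', c' <> c -> f c' <= 1) -> f c <= 3 ->
  sumR f (seq 0 N) <= INR N + 2.
Proof.
  intros Hf Hc.
  assert (H : sumR f (seq 0 N) <= INR N + (if Nat.ltb c N then 2 else 0)).
  { induction N as [|N IH]; [simpl; lra |].
    rewrite seq_S, sumR_app, S_INR. simpl sumR.
    destruct (Nat.eq_dec N c) as [-> | Hne].
    - rewrite Nat.ltb_irrefl in IH. rewrite (proj2 (Nat.ltb_lt c (S c))) by lia. lra.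
    - assert (f N <= 1) by auto.
      destruct (Nat.ltb c N) eqn:E;
        [rewrite (proj2 (Nat.ltb_lt c (S N))) by (apply Nat.ltb_lt in E; lia)
        | rewrite (proj2 (Nat.ltb_ge c (S N))) by (apply Nat.ltb_ge in E; lia)]; lra. }
  destruct (Nat.ltb c N); lra.
Qed.

(** A new node joins colour [c] with probability at most [1/N], [N] the number of colours. *)
Lemma class_potential_step a d c k tr : 0 <= a -> (2 <= k)%nat -> traj_wf k tr ->
  expect (step a d (S k) (hd G2 tr)) (fun G => class_potential c (G :: tr))
  <= class_potential c tr.
Proof.
  intros Ha Hk Htr. destruct (traj_wf_head k tr Htr) as [G [r [-> HG]]]. simpl.
  set (N := ncol G). set (X := exp (excess G c - 2 * inv_ncol_sum r)).
  set (E2 := exp (- (2 / INR N))).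
  assert (HN : 1 <= INR N) by (apply (le_INR 1), (ncol_pos G HG)).
  pose proof (p_i_bounds a (S k) Ha ltac:(lia)) as Hp.
  assert (HX : 0 < X) by apply exp_pos. assert (HE2 : 0 < E2) by apply exp_pos.
  assert (HXE2 : 0 < X * E2) by (apply Rmult_lt_0_compat; auto).
  assert (Hshift : forall v, exp (excess G c + v - 2 * (/ INR N + inv_ncol_sum r)) =
                             X * E2 * exp v).
  { intros v. unfold X, E2. rewrite <- !exp_plus. f_equal. unfold Rdiv. ring. }
  eapply Rle_trans.
  - apply (expect_step_le a d (S k) G _ (X * E2)
             (fun c' => X * E2 * (if Nat.eqb c' c then exp 1 else 1))); auto.
    + lra.
    + intros c'. destruct (Nat.eqb c' c); pose proof (exp_pos 1); nra.
    + intros u us. rewrite excess_fresh by auto. fold N.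
      rewrite <- (Rplus_0_r (excess G c)), Hshift, exp_0. lra.
    + intros c' us _. rewrite excess_old. fold N. rewrite Hshift.
      destruct (Nat.eqb c' c); [| rewrite exp_0]; lra.
  - rewrite sumR_scal.
    assert (Hsum : sumR (fun c' => if Nat.eqb c' c then exp 1 else 1) (seq 0 N) <= INR N + 2).
    { apply (sumR_single_hit _ c); [intros c' Hc'; apply Nat.eqb_neq in Hc'; rewrite Hc'; lra |].
      rewrite Nat.eqb_refl. apply exp_le_3. }
    assert (HE2b : E2 * (1 + 2 / INR N) <= 1).
    { rewrite Rmult_comm. apply one_plus_mul_exp_opp_le. }
    assert (HE2c : E2 <= 1) by (assert (0 < 2 / INR N) by (apply Rdiv_lt_0_compat; lra); nra).
    assert (Hold : X * E2 * sumR (fun c' => if Nat.eqb c' c then exp 1 else 1) (seq 0 N)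
                   / INR N <= X).
    { apply Rle_trans with (X * (E2 * (1 + 2 / INR N))); [| nra].
      replace (X * (E2 * (1 + 2 / INR N))) with (X * E2 * (INR N + 2) / INR N) by (field; lra).
      unfold Rdiv. apply Rmult_le_compat_r; [apply Rlt_le, Rinv_0_lt_compat; lra | nra]. }
    apply Rle_trans with (p_i a (S k) * X + (1 - p_i a (S k)) * X); [| lra].
    fold N. apply Rplus_le_compat; apply Rmult_le_compat_l; try lra.
    rewrite <- (Rmult_1_r X) at 2. apply Rmult_le_compat_l; lra.
Qed.

(** [sum_p a i] is the expected number of colours created up to step [i]. *)
Definition sum_p (a : R) (i : nat) : R := sumR (p_i a) (seq 3 (i - 2)).

Lemma sum_p_S a k : (2 <= k)%nat -> sum_p a (S k) = sum_p a k + p_i a (S k).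
Proof.
  intros Hk. unfold sum_p. replace (S k - 2)%nat with (S (k - 2)) by lia.
  rewrite seq_S, sumR_app. simpl. replace (S (S (S (k - 2)))) with (S k) by lia. ring.
Qed.

Definition colour_potential (a : R) (tr : list state) : R :=
  match tr with
  | [] => 1
  | G :: r => exp (sum_p a (nnodes G) / 2 - INR (ncol G))
  end.

Lemma colour_potential_step a d k tr : 0 <= a -> (2 <= k)%nat -> traj_wf k tr ->
  expect (step a d (S k) (hd G2 tr)) (fun G => colour_potential a (G :: tr))
  <= colour_potential a tr.
Proof.
  intros Ha Hk Htr. pose proof Htr as [_ [Hh _]].
  destruct (traj_wf_head k tr Htr) as [G [r [-> HG]]]. simpl in Hh |- *.
  rewrite Nat.max_l in Hh by lia. rewrite Hh.
  set (N := INR (ncol G)). set (p := p_i a (S k)).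
  pose proof (p_i_bounds a (S k) Ha ltac:(lia)) as Hp. fold p in Hp.
  set (Y := exp (sum_p a k / 2 - N)).
  assert (Hshift : forall v, exp (sum_p a (S k) / 2 - (N + v)) = Y * exp (p / 2) * exp (- v)).
  { intros v. unfold Y. rewrite sum_p_S by auto. rewrite <- !exp_plus. f_equal. unfold p. field. }
  eapply Rle_trans.
  - apply (expect_step_le a d (S k) G _ (Y * exp (p / 2) * exp (- (1)))
             (fun _ => Y * exp (p / 2))); auto.
    + left; repeat apply Rmult_lt_0_compat; apply exp_pos.
    + intros; left; apply Rmult_lt_0_compat; apply exp_pos.
    + intros u us. rewrite nnodes_add_node. simpl ncol. rewrite S_INR. fold N. rewrite Hh, <- Hshift. right; reflexivity.
    + intros c' us _. rewrite nnodes_add_node, Hh. simpl ncol. fold N.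
      rewrite <- (Rplus_0_r N) at 1. rewrite Hshift, Ropp_0, exp_0. lra.
  - rewrite sumR_const, length_seq. fold p N.
    assert (HN : 1 <= N) by (apply (le_INR 1), (ncol_pos G HG)).
    replace (Y * exp (p / 2) * N / N) with (Y * exp (p / 2)) by (field; lra).
    pose proof exp_m1_le_half. pose proof (one_plus_mul_exp_opp_le (- (p / 2))) as Hq.
    rewrite Ropp_involutive in Hq. fold Y.
    assert (HY : 0 < Y * exp (p / 2)) by (apply Rmult_lt_0_compat; apply exp_pos).
    replace (-(1)) with (-1) by ring.
    assert (p * (Y * exp (p / 2) * exp (-1)) <= p * (Y * exp (p / 2) * / 2))
      by (apply Rmult_le_compat_l; [lra | apply Rmult_le_compat_l; lra]).
    apply Rle_trans with (Y * exp (p / 2) * (1 - p / 2)); [lra |].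
    rewrite <- (Rmult_1_r Y) at 2. rewrite Rmult_assoc. apply Rmult_le_compat_l;
      [apply Rlt_le, exp_pos | lra].
Qed.

Lemma prob_at_head_le a d i (Phi : list state -> R) (P : state -> list state -> Prop) v :
  0 <= a -> (1 <= d)%nat -> 0 < v -> (forall tr, 0 <= Phi tr) ->
  (forall k tr, (2 <= k)%nat -> traj_wf k tr ->
     expect (step a d (S k) (hd G2 tr)) (fun G => Phi (G :: tr)) <= Phi tr) ->
  Phi [G2] <= 1 -> (forall G r, traj_wf i (G :: r) -> P G r -> v <= Phi (G :: r)) ->
  prob (traj a d i) (at_head P) <= / v.
Proof.
  intros Ha Hd Hv HPhi Hsuper H0 HP.
  pose proof (subprob_traj a d i Ha) as [Hnn _].
  eapply Rle_trans; [apply (prob_le _ _ (fun tr => v <= Phi tr)); auto |].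
  - intros [|G r] Htr H; [contradiction |]. apply HP; auto. apply supp_traj_wf with a d; auto.
  - eapply Rle_trans; [apply markov; auto |]. unfold Rdiv.
    rewrite <- (Rmult_1_l (/ v)) at 2. apply Rmult_le_compat_r; [apply Rlt_le, Rinv_0_lt_compat; auto |].
    eapply Rle_trans; [apply traj_supermartingale |]; eauto.
Qed.

Lemma class_potential_G2 c : class_potential c [G2] = 1.
Proof.
  unfold class_potential, excess, inv_ncol_sum, class_size, nodes, nnodes, color, G2; simpl.
  destruct c as [|[|c]]; simpl;
    match goal with |- exp ?e = 1 => replace e with 0 by lra end; apply exp_0.
Qed.

Lemma prob_class_large a d n t c C y : 0 <= a -> (1 <= d)%nat -> (2 <= t <= n)%nat ->
  prob (traj a d n) (exists_suffix (fun G r =>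
    nnodes G = t /\ (C < INR (class_size G c) /\ inv_ncol_sum r <= y)))
  <= exp (1 + 2 * y - C).
Proof.
  intros Ha Hd Ht. eapply Rle_trans; [apply prob_exists_suffix_le; auto |].
  replace (exp (1 + 2 * y - C)) with (/ exp (C - 1 - 2 * y))
    by (rewrite <- exp_Ropp; f_equal; ring).
  apply (prob_at_head_le a d t (class_potential c)); auto using exp_pos.
  - intros [|G r]; simpl; [lra | left; apply exp_pos].
  - intros; apply class_potential_step; auto.
  - rewrite class_potential_G2; lra.
  - intros G r _ [HC Hy]. simpl. apply exp_le_mono. unfold excess.
    destruct (Nat.ltb c (ncol G)); lra.
Qed.

Definition few_colours (a J : R) (G : state) : Prop :=
  J <= INR (nnodes G) /\ INR (ncol G) < sum_p a (nnodes G) / 4.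

Lemma prob_few_colours a d n i J : 0 <= a -> (1 <= d)%nat -> (2 <= i <= n)%nat ->
  prob (traj a d n) (exists_suffix (fun G r => nnodes G = i /\ few_colours a J G))
  <= exp (- (sum_p a i / 4)).
Proof.
  intros Ha Hd Hi. eapply Rle_trans; [apply (prob_exists_suffix_le a d i n (fun G _ => few_colours a J G)); auto |].
  rewrite exp_Ropp. apply (prob_at_head_le a d i (colour_potential a)); auto using exp_pos.
  - intros [|G r]; simpl; [lra | left; apply exp_pos].
  - intros; apply colour_potential_step; auto.
  - unfold colour_potential, sum_p, nnodes; simpl. apply exp_le_1. lra.
  - intros G r [_ [Hh _]] [_ Hfew]. simpl in Hh |- *. rewrite Nat.max_l in Hh by lia.
    apply exp_le_mono. rewrite Hh in *. lra.
Qed.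

(** * Analytic estimates *)

Lemma Rpower_pos x y : 0 < Rpower x y.
Proof. apply exp_pos. Qed.

Lemma Rpower_ge1 x a : 1 <= x -> 0 <= a -> 1 <= Rpower x a.
Proof. intros. rewrite <- (Rpower_O x) by lra. apply Rle_Rpower; auto. Qed.

Lemma Rpower_plus1 x a : 0 < x -> Rpower x (a + 1) = Rpower x a * x.
Proof. intros. rewrite Rpower_plus, Rpower_1; auto. Qed.

Lemma ln_le_id y : 0 < y -> ln y <= y.
Proof. intros Hy. pose proof (exp_ineq1_le (ln y)). rewrite exp_ln in H; lra. Qed.

Lemma ln_INR_pos i : (2 <= i)%nat -> 0 < ln (INR i).
Proof. intros. rewrite <- ln_1. apply ln_increasing; [lra | apply (lt_INR 1); lia]. Qed.

Lemma INR_le_inv m n : INR m <= INR n -> (m <= n)%nat.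
Proof. intros H. destruct (le_lt_dec m n); auto. apply lt_INR in l. lra. Qed.

(** [ln^b x] is [O(sqrt x)]: with [z = x^(1/(2b))], [ln x = 2b ln z <= 2b z]. *)
Lemma polylog_eventually_le b : 0 < b ->
  exists x0, 1 < x0 /\ forall x, x0 <= x -> 8 * Rpower (ln x) b + 2 <= x.
Proof.
  intros Hb. set (K := Rpower (2 * b) b). assert (HK : 0 < K) by apply Rpower_pos.
  exists ((8 * K + 2) * (8 * K + 2)). split; [nra |].
  intros x Hx. assert (Hx1 : 1 < x) by nra.
  set (z := Rpower x (/ (2 * b))). assert (Hz : 0 < z) by apply Rpower_pos.
  assert (Hlnx : ln x = 2 * b * ln z) by (unfold z; rewrite ln_Rpower; field; lra).
  assert (Hlx0 : 0 < ln x) by (rewrite <- ln_1; apply ln_increasing; lra).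
  assert (Hle : ln x <= 2 * b * z) by (rewrite Hlnx; pose proof (ln_le_id z Hz); nra).
  set (s := Rpower x (/ 2)). assert (Hs0 : 0 < s) by apply Rpower_pos.
  assert (Hs : s * s = x).
  { unfold s. rewrite <- Rpower_plus. replace (/ 2 + / 2) with 1 by field. apply Rpower_1; lra. }
  assert (HP : Rpower (ln x) b <= K * s).
  { apply Rle_trans with (Rpower (2 * b * z) b); [apply Rle_Rpower_l; lra |].
    unfold K. rewrite <- Rpower_mult_distr by lra. right. f_equal.
    unfold z, s. rewrite Rpower_mult. f_equal. field. lra. }
  assert (Hsb : 8 * K + 2 <= s).
  { destruct (Rle_lt_dec (8 * K + 2) s); auto.
    assert (s * s < (8 * K + 2) * (8 * K + 2)) by nra. lra. }
  nra.
Qed.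

Lemma p_i_inv a i : p_i a i = / Rpower (ln (INR i)) a.
Proof. apply Rpower_Ropp. Qed.

Lemma p_i_antitone a j i : 0 <= a -> (3 <= j <= i)%nat -> p_i a i <= p_i a j.
Proof.
  intros Ha Hji. unfold p_i, Rpower. apply exp_le_mono.
  assert (1 <= ln (INR j)) by (apply ln_INR_ge1; lia).
  assert (ln (INR j) <= ln (INR i)) by (apply ln_le_mono; [apply lt_0_INR | apply le_INR]; lia).
  assert (ln (ln (INR j)) <= ln (ln (INR i))) by (apply ln_le_mono; lra).
  nra.
Qed.

Lemma sum_p_ge a i : 0 <= a -> (3 <= i)%nat -> p_i a i * INR (i - 2) <= sum_p a i.
Proof.
  intros Ha Hi. unfold sum_p.
  replace (INR (i - 2)) with (INR (length (seq 3 (i - 2)))) by (rewrite length_seq; auto).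
  apply sumR_ge_const. intros x Hx. apply in_seq in Hx. apply p_i_antitone; auto; lia.
Qed.

Lemma sum_p_ge_linear a i : 0 <= a -> (3 <= i)%nat ->
  INR (i - 2) / Rpower (ln (INR i)) a <= sum_p a i.
Proof.
  intros Ha Hi. pose proof (sum_p_ge a i Ha Hi). rewrite p_i_inv in H.
  unfold Rdiv. rewrite Rmult_comm. auto.
Qed.

Definition shifted_harmonic (i : nat) : R := if Nat.leb 3 i then / INR (i - 2) else 0.

Lemma shifted_harmonic_nonneg i : 0 <= shifted_harmonic i.
Proof.
  unfold shifted_harmonic. destruct (Nat.leb 3 i) eqn:E; [| lra].
  apply Nat.leb_le in E. apply Rlt_le, Rinv_0_lt_compat, lt_0_INR. lia.
Qed.

Lemma inv_succ_le_ln_diff x : 0 < x -> / (x + 1) <= ln (x + 1) - ln x.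
Proof.
  intros Hx. assert (Hq : 0 < x / (x + 1)) by (apply Rdiv_lt_0_compat; lra).
  pose proof (exp_ineq1_le (ln (x / (x + 1)))) as Hl. rewrite exp_ln in Hl by auto.
  unfold Rdiv in Hl. rewrite ln_mult, ln_Rinv in Hl by (try apply Rinv_0_lt_compat; lra).
  replace (x * / (x + 1)) with (1 - / (x + 1)) in Hl by (field; lra). lra.
Qed.

Lemma harmonic_le_ln m : (1 <= m)%nat -> sumR shifted_harmonic (seq 2 (S m)) <= 1 + ln (INR m).
Proof.
  intros Hm. induction Hm as [|m Hm IH].
  - simpl. unfold shifted_harmonic; simpl. rewrite ln_1. lra.
  - rewrite seq_S, sumR_app.
    replace (sumR shifted_harmonic [(2 + S m)%nat]) with (/ INR (S m))
      by (unfold sumR, shifted_harmonic; simpl; ring).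
    assert (Hm0 : 0 < INR m) by (apply lt_0_INR; lia).
    pose proof (inv_succ_le_ln_diff (INR m) Hm0). rewrite S_INR. lra.
Qed.

Definition below (J : R) (i : nat) : R := if Rlt_dec (INR i) J then 1 else 0.

Lemma sumR_below J s m : sumR (below J) (seq s m) <= Rmax 0 (J - INR s + 1).
Proof.
  revert s. induction m as [|m IH]; intros s; simpl; [apply Rmax_l |].
  specialize (IH (S s)). rewrite S_INR in IH. unfold below at 1. unfold Rmax in *.
  destruct Rlt_dec; destruct Rle_dec; destruct Rle_dec; lra.
Qed.

Lemma telescope_le x m : 1 < x ->
  sumR (fun i => if excluded_middle_informative (x <= INR i) then / (INR i * (INR i - 1)) else 0)
    (seq 2 m) <= Rmax 0 (/ (x - 1) - / INR (S m)).
Proof.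
  intros Hx. induction m as [|m IH]; [simpl; apply Rmax_l |].
  rewrite seq_S, sumR_app. unfold sumR at 2; cbn [fold_right].
  replace (2 + m)%nat with (S (S m)) by lia.
  assert (H1 : 1 <= INR (S m)) by (apply (le_INR 1); lia).
  rewrite (S_INR (S m)). set (y := INR (S m)) in *.
  assert (Hy : / (y + 1) < / y) by (apply Rinv_lt_contravar; nra).
  destruct excluded_middle_informative as [Hle | Hle].
  - assert (/ ((y + 1) * (y + 1 - 1)) = / y - / (y + 1)) by (field; lra).
    assert (/ y <= / (x - 1)) by (apply Rinv_le_contravar; lra).
    unfold Rmax in *. destruct Rle_dec; destruct Rle_dec; lra.
  - unfold Rmax in *. destruct Rle_dec; destruct Rle_dec; lra.
Qed.

Lemma telescope_tail_le x m : 1 < x ->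
  sumR (fun i => if excluded_middle_informative (x <= INR i) then / (INR i * (INR i - 1)) else 0)
    (seq 2 m) <= / (x - 1).
Proof.
  intros Hx. eapply Rle_trans; [apply telescope_le; auto |].
  assert (0 < / INR (S m)) by (apply Rinv_0_lt_compat, lt_0_INR; lia).
  assert (0 < / (x - 1)) by (apply Rinv_0_lt_compat; lra).
  unfold Rmax; destruct Rle_dec; lra.
Qed.

(** * The colour budget *)

Lemma inv_ncol_sum_le_sumR G r (f : nat -> R) : chain (G :: r) ->
  (forall G', In G' r -> / INR (ncol G') <= f (nnodes G')) ->
  inv_ncol_sum r <= sumR f (seq 2 (nnodes G - 2)).
Proof.
  revert G. induction r as [|G1 r IH]; intros G Hc Hf.
  - simpl in Hc. rewrite Hc. simpl. lra.
  - destruct Hc as [H1 H2]. pose proof (chain_nnodes_ge2 _ H2) as H3. simpl in H3.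
    rewrite H1. replace (S (nnodes G1) - 2)%nat with (S (nnodes G1 - 2)) by lia.
    rewrite seq_S, sumR_app. replace (2 + (nnodes G1 - 2))%nat with (nnodes G1) by lia.
    unfold sumR at 2; cbn [fold_right inv_ncol_sum].
    assert (/ INR (ncol G1) <= f (nnodes G1)) by (apply Hf; simpl; auto).
    assert (inv_ncol_sum r <= sumR f (seq 2 (nnodes G1 - 2)))
      by (apply IH; auto; intros; apply Hf; simpl; auto).
    fold (inv_ncol_sum r). lra.
Qed.

(** Below time [J] there is at least one colour; from then on, unless there are few
    colours, [ncol >= sum_p / 4 >= (i - 2) / (4 ln^a i)]. *)
Lemma inv_ncol_le a J t G : 0 <= a -> 2 < J -> wf_state G -> ~ few_colours a J G ->
  (2 <= nnodes G <= t)%nat ->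
  / INR (ncol G) <= below J (nnodes G) + 4 * Rpower (ln (INR t)) a * shifted_harmonic (nnodes G).
Proof.
  intros Ha HJ HG Hfew Hi. set (i := nnodes G) in *. set (K := Rpower (ln (INR t)) a).
  assert (HK : 0 < K) by apply Rpower_pos.
  assert (HN : 1 <= INR (ncol G)) by (apply (le_INR 1), (ncol_pos G HG)).
  pose proof (shifted_harmonic_nonneg i).
  unfold below. destruct Rlt_dec as [Hl | Hl].
  - assert (/ INR (ncol G) <= 1) by (rewrite <- Rinv_1; apply Rinv_le_contravar; lra). nra.
  - apply Rnot_lt_le in Hl.
    assert (Hi3 : (3 <= i)%nat).
    { destruct (Nat.eq_dec i 2) as [E | E]; [| lia]. rewrite E in Hl. simpl in Hl. lra. }
    assert (Hmu : sum_p a i / 4 <= INR (ncol G))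
      by (destruct (Rle_lt_dec (sum_p a i / 4) (INR (ncol G))); auto; exfalso; apply Hfew; split; auto).
    pose proof (sum_p_ge_linear a i Ha Hi3) as Hlin.
    assert (Hi2 : 1 <= INR (i - 2)) by (apply (le_INR 1); lia).
    set (P := Rpower (ln (INR i)) a) in *. assert (HP : 0 < P) by apply Rpower_pos.
    assert (HPK : P <= K).
    { apply Rle_Rpower_l; auto. split; [apply ln_INR_pos; lia |].
      apply ln_le_mono; [apply lt_0_INR | apply le_INR]; lia. }
    replace (shifted_harmonic i) with (/ INR (i - 2))
      by (unfold shifted_harmonic; rewrite (proj2 (Nat.leb_le 3 i)); auto).
    apply Rle_trans with (/ (INR (i - 2) / P / 4)).
    { apply Rinv_le_contravar; [| lra]. apply Rdiv_lt_0_compat; [apply Rdiv_lt_0_compat |]; lra. }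
    replace (/ (INR (i - 2) / P / 4)) with (4 * P * / INR (i - 2)) by (field; lra).
    assert (0 < / INR (i - 2)) by (apply Rinv_0_lt_compat; lra).
    assert (4 * P * / INR (i - 2) <= 4 * K * / INR (i - 2)) by (apply Rmult_le_compat_r; lra).
    lra.
Qed.

Definition inv_ncol_budget (a J : R) (t : nat) : R :=
  J + 4 * Rpower (ln (INR t)) a * (1 + ln (INR t)).

Lemma inv_ncol_sum_le_budget a J G r : 0 <= a -> 3 <= J -> chain (G :: r) -> Forall wf_state r ->
  (forall G', In G' r -> ~ few_colours a J G') -> (4 <= nnodes G)%nat ->
  inv_ncol_sum r <= inv_ncol_budget a J (nnodes G).
Proof.
  intros Ha HJ Hc Hf HB Ht. set (t := nnodes G) in *. set (K := Rpower (ln (INR t)) a).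
  assert (HK : 0 < K) by apply Rpower_pos.
  eapply Rle_trans.
  { apply (inv_ncol_sum_le_sumR G r (fun i => below J i + 4 * K * shifted_harmonic i)); auto.
    intros G' HG'. apply inv_ncol_le; auto; try lra; [rewrite Forall_forall in Hf; auto |].
    pose proof (chain_In_nnodes (G :: r) G' Hc (or_intror HG')).
    pose proof (chain_nnodes_lt G r Hc G' HG'). simpl in *. lia. }
  rewrite sumR_plus, sumR_scal.
  pose proof (sumR_below J 2 (t - 2)) as Hg. replace (INR 2) with 2 in Hg by (simpl; lra).
  replace (Rmax 0 (J - 2 + 1)) with (J - 1) in Hg by (unfold Rmax; destruct Rle_dec; lra).
  pose proof (harmonic_le_ln (t - 3) ltac:(lia)) as Hh.
  replace (S (t - 3)) with (t - 2)%nat in Hh by lia.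
  assert (ln (INR (t - 3)) <= ln (INR t)) by (apply ln_le_mono; [apply lt_0_INR | apply le_INR]; lia).
  unfold inv_ncol_budget. fold t K. nra.
Qed.

(** * Union bounds *)

Definition T1 (a : R) (n : nat) : R := Rpower (ln (INR n)) (a + 1).

Definition colours_fail (a J : R) (i : nat) (tr : list state) : Prop :=
  exists_suffix (fun G _ => nnodes G = i /\ few_colours a J G) tr.

Definition class_fails (a J : R) (t c : nat) (tr : list state) : Prop :=
  exists_suffix (fun G r => nnodes G = t /\
    (24 * Rpower (ln (INR t)) (a + 1) < INR (class_size G c) /\
     inv_ncol_sum r <= inv_ncol_budget a J t)) tr.

Lemma not_good_witness a n tr : traj_wf n tr -> (2 <= n)%nat -> T1 a n <= INR n ->
  ~ good a 24 n tr ->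
  exists G, In G tr /\ T1 a n <= INR (nnodes G) /\
    exists c, 24 * Rpower (ln (INR (nnodes G))) (a + 1) < INR (class_size G c).
Proof.
  intros [Hc [Hh _]] Hn HTn Hng. rewrite Nat.max_l in Hh by lia.
  destruct tr as [|G0 r]; [contradiction |]. simpl in Hh. unfold good, T1 in *.
  apply not_and_or in Hng as [H | H].
  - apply not_all_ex_not in H as [c H]. apply Rnot_le_lt in H.
    exists G0. simpl. rewrite Hh. split; [auto | split; [lra | exists c; auto]].
  - apply not_all_ex_not in H as [G H]. apply imply_to_and in H as [HG H].
    apply imply_to_and in H as [HT H]. apply not_all_ex_not in H as [c H].
    apply Rnot_le_lt in H. exists G. split; [| split]; auto. exists c; auto.
Qed.

Lemma class_index_lt G c v : wf_state G -> 0 <= v -> v < INR (class_size G c) ->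
  (c < nnodes G)%nat.
Proof.
  intros HG Hv Hc. pose proof (ncol_le_nnodes G HG).
  destruct (le_lt_dec (ncol G) c) as [Hle | Hlt]; [| lia].
  rewrite (class_size_unused G c HG Hle) in Hc. simpl in Hc. lra.
Qed.

Lemma not_good_cases a d n tr : 0 <= a -> (1 <= d)%nat -> (2 <= n)%nat ->
  3 <= ln (T1 a n) -> T1 a n <= INR n -> supp (traj a d n) tr -> ~ good a 24 n tr ->
  (exists i, In i (seq 2 (n - 1)) /\ colours_fail a (ln (T1 a n)) i tr) \/
  (exists t, In t (seq 2 (n - 1)) /\ (T1 a n <= INR t /\
     exists c, In c (seq 0 t) /\ class_fails a (ln (T1 a n)) t c tr)).
Proof.
  intros Ha Hd Hn HJ HTn Htr Hng. set (J := ln (T1 a n)) in *.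
  pose proof (supp_traj_wf a d n tr Hd Htr) as Hwf. pose proof Hwf as [Hc [Hh Hf]].
  rewrite Nat.max_l in Hh by lia.
  assert (Hrange : forall G, In G tr -> In (nnodes G) (seq 2 (n - 1))).
  { intros G HG. apply in_seq. pose proof (chain_In_nnodes tr G Hc HG). lia. }
  destruct (not_good_witness a n tr Hwf Hn HTn Hng) as [Gt [HGt [HT [c Hcs]]]].
  destruct (classic (exists G, In G tr /\ few_colours a J G)) as [[G [HG Hfew]] | Hnfew].
  - left. exists (nnodes G). split; auto.
    apply in_split in HG as [l1 [l2 ->]]. apply exists_suffix_app. auto.
  - right. exists (nnodes Gt). split; [auto | split; auto].
    assert (HIt : wf_state Gt) by (rewrite Forall_forall in Hf; auto).
    assert (HL : 0 <= 24 * Rpower (ln (INR (nnodes Gt))) (a + 1))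
      by (pose proof (Rpower_pos (ln (INR (nnodes Gt))) (a + 1)); lra).
    exists c. split; [apply in_seq; split; [lia | apply (class_index_lt Gt c _ HIt HL Hcs)] |].
    apply in_split in HGt as [l1 [r ->]]. apply exists_suffix_app. split; auto. split; auto.
    assert (Hin : forall x, In x r -> In x (l1 ++ Gt :: r))
      by (intros; apply in_or_app; simpl; auto).
    apply inv_ncol_sum_le_budget; auto.
    + apply (chain_app_inv l1); auto. discriminate.
    + rewrite Forall_forall in *. auto.
    + intros x Hx HBx. apply Hnfew. exists x. auto.
    + apply INR_le_inv. simpl. pose proof (exp_ineq1_le J). unfold J in *.
      rewrite exp_ln in * by apply Rpower_pos. lra.
Qed.

Definition tail_weight (x : R) (i : nat) : R :=
  if excluded_middle_informative (x <= INR i) then / (INR i * (INR i - 1)) else 0.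

Lemma exp_neg_k_ln k x : 0 < x -> exp (- (INR k * ln x)) = / x ^ k.
Proof.
  intros Hx. rewrite exp_Ropp. f_equal. induction k as [|k IH]; [simpl; rewrite Rmult_0_l; apply exp_0 |].
  rewrite S_INR, Rmult_plus_distr_r, Rmult_1_l, exp_plus, IH, exp_ln by auto. simpl. ring.
Qed.

(** The growth hypothesis gives [sum_p a i >= 8 ln i], hence the bound [1 / i^2]. *)
Lemma prob_colours_fail_le a d n i J : 1 < a -> (1 <= d)%nat -> (2 <= i <= n)%nat -> 3 <= J ->
  (J <= INR i -> 8 * Rpower (ln (INR i)) (a + 1) + 2 <= INR i) ->
  prob (traj a d n) (colours_fail a J i) <= tail_weight J i.
Proof.
  intros Ha Hd Hi HJ Hgr. unfold tail_weight. destruct excluded_middle_informative as [HiJ | HiJ].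
  - eapply Rle_trans; [apply prob_few_colours; auto; lra |].
    assert (Hi3 : (3 <= i)%nat) by (apply INR_le_inv; simpl; lra).
    pose proof (sum_p_ge_linear a i ltac:(lra) Hi3) as Hlin.
    set (P := Rpower (ln (INR i)) a) in *. assert (HP : 0 < P) by apply Rpower_pos.
    assert (Hl : 0 < ln (INR i)) by (apply ln_INR_pos; lia).
    specialize (Hgr HiJ). rewrite Rpower_plus1 in Hgr by auto. fold P in Hgr.
    rewrite minus_INR in Hlin by lia. replace (INR 2) with 2 in Hlin by (simpl; lra).
    assert (Hm : 8 * ln (INR i) <= sum_p a i).
    { eapply Rle_trans; [| exact Hlin]. apply Rmult_le_reg_r with P; auto.
      replace ((INR i - 2) / P * P) with (INR i - 2) by (field; lra). lra. }
    eapply Rle_trans; [apply exp_le_mono with (y := - (INR 2 * ln (INR i))); simpl; lra |].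
    rewrite exp_neg_k_ln by lra. simpl. rewrite Rmult_1_r.
    apply Rinv_le_contravar; nra.
  - apply prob_never; [apply subprob_traj; lra |]. intros tr _ HE. apply HiJ.
    unfold colours_fail in HE. induction tr as [|G r IH]; simpl in HE; [contradiction |].
    destruct HE as [[<- [HB _]] | HE]; auto.
Qed.

(** At a time [t >= T1], each of the [t] classes is large with probability at most [e / t^3]. *)
Lemma prob_class_fails_le a d n t J : 1 < a -> (1 <= d)%nat -> (2 <= t <= n)%nat -> 3 <= J ->
  exp J <= INR t ->
  prob (traj a d n) (fun tr => exists c, In c (seq 0 t) /\ class_fails a J t c tr)
  <= 3 * / (INR t * (INR t - 1)).
Proof.
  intros Ha Hd Ht HJ HJt. pose proof (subprob_traj a d n ltac:(lra)) as [Hnn _].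
  eapply Rle_trans; [apply prob_union; auto |].
  pose proof (exp_ineq1_le J).
  assert (Ht3 : (3 <= t)%nat) by (apply INR_le_inv; simpl; lra).
  assert (Hl1 : 1 <= ln (INR t)) by (apply ln_INR_ge1; auto).
  assert (HJt' : J <= ln (INR t)) by (rewrite <- (ln_exp J); apply ln_le_mono; auto using exp_pos).
  set (P := Rpower (ln (INR t)) a). assert (HP1 : 1 <= P) by (apply Rpower_ge1; lra).
  eapply Rle_trans; [apply sumR_le with (g := fun _ => exp 1 * exp (- (INR 3 * ln (INR t)))) |].
  { intros c _. eapply Rle_trans; [apply prob_class_large; [lra | auto | lia] |].
    rewrite <- exp_plus. apply exp_le_mono. unfold inv_ncol_budget. fold P.
    rewrite Rpower_plus1 by lra. fold P. simpl. nra. }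
  rewrite sumR_const, length_seq, exp_neg_k_ln by lra. simpl.
  set (x := INR t) in *. pose proof exp_le_3. pose proof (exp_pos 1).
  replace (exp 1 * / (x * (x * (x * 1))) * x) with (exp 1 * / (x * x)) by (field; lra).
  assert (/ (x * x) <= / (x * (x - 1))) by (apply Rinv_le_contravar; nra).
  assert (0 < / (x * x)) by (apply Rinv_0_lt_compat; nra).
  nra.
Qed.

Lemma prob_not_good_le a d n x0 : 1 < a -> (1 <= d)%nat -> (2 <= n)%nat ->
  3 <= ln (T1 a n) -> x0 <= ln (T1 a n) -> T1 a n <= INR n ->
  (forall x, x0 <= x -> 8 * Rpower (ln x) (a + 1) + 2 <= x) ->
  prob (traj a d n) (fun tr => ~ good a 24 n tr) <= / (ln (T1 a n) - 1) + 3 * / (T1 a n - 1).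
Proof.
  intros Ha Hd Hn HJ Hx0 HTn Hgr. pose proof (subprob_traj a d n ltac:(lra)) as [Hnn _].
  assert (HT : exp (ln (T1 a n)) = T1 a n) by (apply exp_ln, Rpower_pos).
  set (J := ln (T1 a n)) in *. set (T := T1 a n) in *.
  eapply Rle_trans; [apply prob_le; [auto | intros tr Htr Hng; apply (not_good_cases a d n tr);
    auto; lra] |].
  fold T J. eapply Rle_trans; [apply prob_or; auto |]. apply Rplus_le_compat.
  - eapply Rle_trans; [apply prob_union; auto |].
    eapply Rle_trans; [| apply (telescope_tail_le J (n - 1)); lra].
    apply sumR_le. intros i Hi. apply in_seq in Hi.
    apply prob_colours_fail_le; try lia; try lra. intros HiJ. apply Hgr. lra.
  - eapply Rle_trans; [apply prob_union; auto |].
    rewrite <- HT.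
    eapply Rle_trans with (sumR (fun t => 3 * tail_weight (exp J) t) (seq 2 (n - 1))).
    2: { rewrite sumR_scal. apply Rmult_le_compat_l; [lra |]. apply telescope_tail_le.
         pose proof (exp_ineq1_le J). lra. }
    apply sumR_le. intros t Ht. apply in_seq in Ht. unfold tail_weight.
    destruct excluded_middle_informative as [HtT | HtT].
    + eapply Rle_trans; [apply prob_le; [auto | intros tr _ [_ H]; exact H] |].
      apply prob_class_fails_le; auto; lia || lra.
    + rewrite Rmult_0_r. apply prob_never; auto. intros tr _ [H _]. apply HtT. lra.
Qed.

Lemma ln_T1_eventually_ge a M : 0 < a -> 0 <= M ->
  exists N, forall n, (N <= n)%nat -> (2 <= n)%nat /\ exp (exp M) < INR n /\ M <= ln (T1 a n).
Proof.
  intros Ha HM. destruct (INR_unbounded (exp (exp M))) as [N HN].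
  exists (N + 2)%nat. intros n Hn. split; [lia |].
  assert (HnR : exp (exp M) < INR n) by (apply Rlt_le_trans with (INR N); [lra | apply le_INR; lia]).
  split; auto.
  assert (Hlnn : exp M < ln (INR n)) by (rewrite <- (ln_exp (exp M)); apply ln_increasing; auto using exp_pos).
  assert (M < ln (ln (INR n))) by (rewrite <- (ln_exp M); apply ln_increasing; auto using exp_pos).
  unfold T1. rewrite ln_Rpower. nra.
Qed.

Lemma prob_not_good_vanishes a d eps : 1 < a -> (1 <= d)%nat -> 0 < eps ->
  exists N, forall n, (N <= n)%nat -> prob (traj a d n) (fun tr => ~ good a 24 n tr) <= eps.
Proof.
  intros Ha Hd Heps. destruct (polylog_eventually_le (a + 1) ltac:(lra)) as [x0 [Hx01 Hgr]].
  assert (H8 : 0 < 8 / eps) by (apply Rdiv_lt_0_compat; lra).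
  set (M := 3 + x0 + 8 / eps).
  destruct (ln_T1_eventually_ge a M ltac:(lra) ltac:(unfold M; lra)) as [N HN].
  exists N. intros n Hn. destruct (HN n Hn) as [Hn2 [HnR HJ]].
  pose proof (exp_ineq1_le M). pose proof (exp_ineq1_le (exp M)).
  assert (HTn : T1 a n <= INR n).
  { pose proof (Hgr (INR n) ltac:(unfold M in *; lra)). pose proof (Rpower_pos (ln (INR n)) (a + 1)).
    unfold T1. lra. }
  eapply Rle_trans; [apply (prob_not_good_le a d n x0); auto; unfold M in HJ; lra |].
  set (J := ln (T1 a n)) in *.
  assert (HT : 1 + J <= T1 a n)
    by (pose proof (exp_ineq1_le J) as HJe; unfold J in HJe; rewrite exp_ln in HJe by apply Rpower_pos; auto).
  assert (Hinv : forall x, 8 / eps <= x -> / x <= eps / 8).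
  { intros x Hx. replace (eps / 8) with (/ (8 / eps)) by (field; lra). apply Rinv_le_contravar; lra. }
  assert (/ (J - 1) <= eps / 8) by (apply Hinv; unfold M in HJ; lra).
  assert (/ (T1 a n - 1) <= eps / 8) by (apply Hinv; unfold M in HJ; lra).
  lra.
Qed.

Theorem lemma3 (a : R) (d : nat) :
  1 < a -> (4 <= d)%nat ->
  exists C : R,
    Un_cv (fun n : nat => prob (traj a d n) (good a C n)) 1.
Proof.
  intros Ha Hd. exists 24. intros eps Heps.
  destruct (prob_not_good_vanishes a d (eps / 2) Ha ltac:(lia) ltac:(lra)) as [N HN].
  exists N. intros n Hn. specialize (HN n ltac:(lia)).
  pose proof (prob_not (traj a d n) (good a 24 n)) as Hsplit.
  rewrite mass_traj in Hsplit by lia.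
  assert (0 <= prob (traj a d n) (fun tr => ~ good a 24 n tr)).
  { rewrite prob_expect. apply expect_nonneg; [apply subprob_traj; lra |].
    intros; apply indicator_bounds. }
  unfold R_dist. rewrite Rabs_left1 by lra. lra.
Qed.
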